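(* Let $\{\mathbf Z_i(n), i\in\mathbb N\}$ be a critical GWBP/$\infty$ with mean matrix $\mathbf M\in\mathcal M_1$ and $\mathbf F(\mathbf s)\neq\mathbf M\mathbf s$. Then $$\lim_{z\uparrow1}\sup_{i\in\mathbb N}\frac{(1-z)\mathbb EZ_i-\mathbb E(1-z^{Z_i})}{(1-z)\mathbb EZ_i}=0$$ and $$\lim_{z\uparrow1}\sup_{i\in\mathbb N}\frac{(1-z)\mathbb EZ_i-\sum_{j\in\mathbb N}\mathbb E(1-z^{Z_{ij}})}{(1-z)\mathbb EZ_i}=0.$$
   Context: A GWBP/$\infty$ has types $\mathbb N=\{1,2,\dots\}$. Each particle lives one unit of time; a type-$i$ particle produces, independently of everything else, a random vector $\mathbf Z_i=(Z_{ij})_{j\in\mathbb N}$ of children ($Z_{ij}$ of type $j$), with $Z_i:=\sum_jZ_{ij}<\infty$ a.s. $\mathbf Z_i(n)=(Z_{ij}(n))_j$ is the generation-$n$ population vector starting from one type-$i$ particle. $F_i(\mathbf s)=\mathbb E\prod_js_j^{Z_{ij}}$ for $\mathbf s\in[0,1]^{\mathbb N}$; ''$\mathbf F(\mathbf s)\neq\mathbf M\mathbf s$'' means it is not true that $F_i(\mathbf s)=\sum_jM_{ij}s_j$ for all $i,\mathbf s$. Mean matrix $\mathbf M=(M_{ij})$, $M_{ij}=\mathbb EZ_{ij}$, $M^{(n)}_{ij}=\mathbb EZ_{ij}(n)$, $M_i=\sum_jM_{ij}=\mathbb EZ_i$. Irreducible: for all $i,j$ some $M^{(n)}_{ij}>0$;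 aperiodic: gcd of such $n$ is 1; then $\lim_n(M^{(n)}_{ij})^{1/n}=1/R$ for a common $R$; critical: $R=1$. $\mathbf M\in\mathcal M_1$ means: (i) irreducible, aperiodic, $R=1$, 1-recurrent ($\sum_nM^{(n)}_{ij}=\infty$) and 1-positive ($\lim_nM^{(n)}_{ij}>0$ for all $i,j$); then there are positive eigenvectors $\mathbf v\mathbf M=\mathbf v$, $\mathbf M\mathbf u^T=\mathbf u^T$, unique up to positive multiples, normalized with $\sum_jv_ju_j=1$; (ii) $\sum_jv_j=1$ and $\sup_iu_i<\infty$; (iii) $\lim_{N\to\infty}\sup_iM_i^{-1}\sum_{j>N}M_{ij}=0$ and $\lim_{K\to\infty}\sup_iM_i^{-1}\mathbb E[Z_i;Z_i>K]=0$. *)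

From mathcomp Require Import all_boot all_order all_algebra.
From mathcomp Require Import all_classical all_reals all_analysis.
Set Implicit Arguments. Unset Strict Implicit. Unset Printing Implicit Defensive.
Import Order.TTheory GRing.Theory Num.Theory.
Import numFieldNormedType.Exports.
Local Open Scope classical_set_scope.
Local Open Scope ring_scope.

(* Types are indexed by nat = {0,1,2,...} (type k+1 of the paper is k here).
   An offspring vector (Z_ij)_j with finitely many nonzero entries (Z_i < oo a.s.)
   is represented by a finite list v : seq nat with Z_ij = nth 0 v j.
   The offspring law of a type-i particle is a discrete probability
   [p i : seq nat -> R] (nonnegative, total mass 1). *)

Section GWBP.
Variable R : realType.
Variable p : nat -> seq nat -> R.

Definition is_offspring_law : Prop :=
  (forall i v, 0 <= p i v) /\
  (forall i, (\esum_(v in [set: seq nat]) (p i v)%:E = 1)%E).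

(* E f(Z_i), for f >= 0 (as an extended real) *)
Definition expect (i : nat) (f : seq nat -> R) : \bar R :=
  \esum_(v in [set: seq nat]) (p i v * f v)%:E.

Definition Zij (v : seq nat) (j : nat) : nat := nth 0%N v j.
Definition Ztot (v : seq nat) : nat := sumn v.

Definition Mext (i j : nat) : \bar R := expect i (fun v => (Zij v j)%:R).
Definition Miext (i : nat) : \bar R := expect i (fun v => (Ztot v)%:R).
Definition M (i j : nat) : R := fine (Mext i j).
Definition Mi (i : nat) : R := fine (Miext i).

(* M^(n)_ij = E Z_ij(n) = (M^n)_ij, computed in the extended nonnegative reals *)
Fixpoint Mpow (n : nat) (i j : nat) : \bar R :=
  match n with
  | 0%N => (if i == j then 1 else 0)%E
  | n'.+1 => (\sum_(0 <= k <oo) (Mpow n' i k * (M k j)%:E))%E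
  end.

Definition F (i : nat) (s : nat -> R) : \bar R :=
  expect i (fun v => \prod_(j < size v) s j ^+ Zij v j).

Definition F_linear : Prop :=
  forall i (s : nat -> R), (forall j, 0 <= s j <= 1) ->
    F i s = (\sum_(0 <= j <oo) (M i j * s j)%:E)%E.

Definition irreducible : Prop :=
  forall i j, exists n, (0 < Mpow n.+1 i j)%E.

Definition aperiodic : Prop :=
  forall i d, (1 < d)%N ->
    exists n, (0 < n)%N /\ (0 < Mpow n i i)%E /\ ~~ (d %| n)%N.

(* convergence parameter R = 1:  lim_n (M^(n)_ij)^(1/n) = 1 (all M^(n)_ij finite) *)
Definition critical : Prop :=
  (forall n i j, (Mpow n i j < +oo)%E) /\
  forall i j, (fun n : nat => fine (Mpow n.+1 i j) `^ (n.+1%:R)^-1) @ \oo --> (1 : R).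

Definition one_recurrent : Prop :=
  forall i j, (\sum_(0 <= n <oo) Mpow n i j)%E = +oo%E.

Definition one_positive : Prop :=
  forall i j, exists l : R, 0 < l /\ (fun n => fine (Mpow n i j)) @ \oo --> l.

Definition in_M1 : Prop :=
  (* means E Z_i are finite (M_i^{-1} below is a genuine real inverse) *)
  (forall i, (Miext i < +oo)%E) /\
  irreducible /\ aperiodic /\ critical /\ one_recurrent /\ one_positive /\
  (exists v u : nat -> R,
      (forall j, 0 < v j) /\ (forall i, 0 < u i) /\
      (forall j, (\sum_(0 <= k <oo) (v k * M k j)%:E)%E = (v j)%:E) /\
      (forall i, (\sum_(0 <= k <oo) (M i k * u k)%:E)%E = (u i)%:E) /\
      (\sum_(0 <= j <oo) (v j * u j)%:E)%E = 1%E /\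
      (\sum_(0 <= j <oo) (v j)%:E)%E = 1%E /\
      (exists B : R, forall i, u i <= B)) /\
  ((fun N : nat => ereal_sup [set ((Mi i)^-1%:E * \sum_(N <= j <oo) (M i j)%:E)%E
                              | i in [set: nat]]) @ \oo --> 0%E) /\
  ((fun K : nat => ereal_sup [set ((Mi i)^-1%:E *
          expect i (fun v => if (K < Ztot v)%N then (Ztot v)%:R else 0)%R)%E
                              | i in [set: nat]]) @ \oo --> 0%E).

Definition ratio1 (z : R) (i : nat) : R :=
  ((1 - z) * Mi i - fine (expect i (fun v => 1 - z ^+ Ztot v))) / ((1 - z) * Mi i).

Definition ratio2 (z : R) (i : nat) : R :=
  ((1 - z) * Mi i -
     fine (\sum_(0 <= j <oo) expect i (fun v => (1 - z ^+ Zij v j)%R))%E)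
  / ((1 - z) * Mi i).

End GWBP.

From mathcomp Require Import all_boot all_order all_algebra.
From mathcomp Require Import all_classical all_reals all_analysis.
From mathcomp Require Import lra.
Set Implicit Arguments. Unset Strict Implicit. Unset Printing Implicit Defensive.
Import Order.TTheory GRing.Theory Num.Theory.
Import numFieldNormedType.Exports.
Local Open Scope classical_set_scope.
Local Open Scope ring_scope.

(* Only the finiteness of the means and the uniform integrability condition
   (second half of (iii)) are needed.  For an offspring vector with total Z
   and 0 <= z <= 1,
     1 - z^Z <= sum_j (1 - z^{Z_j}) <= (1 - z) Z
   and, for every truncation level K,
     (1 - z) z^K Z <= (1 - z^Z) + (1 - z) Z 1{Z > K}.
   Taking expectations, both ratios lie in [0, 1 - z^K + E[Z_i; Z_i > K] / E Z_i],
   which is at most K (1 - z) + sup_i E[Z_i; Z_i > K] / E Z_i: choose K to make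
   the second term small, then z close to 1. *)

Definition upper_tail {R : pzSemiRingType} (K k : nat) : R :=
  if (K < k)%N then k%:R else 0.

Section OnemX.
Variables (R : numDomainType) (z : R).
Hypothesis z01 : 0 <= z <= 1.

Let z_ge0 : 0 <= z. Proof. by case/andP: z01. Qed.
Let z_le1 : z <= 1. Proof. by case/andP: z01. Qed.
Let onem_ge0 : 0 <= 1 - z. Proof. by rewrite subr_ge0. Qed.

Lemma onemX_sum k : 1 - z ^+ k = (1 - z) * \sum_(i < k) z ^+ i.
Proof.
rewrite -{1}(expr1n R k) subrXX; congr (_ * _).
by apply: eq_bigr => i _; rewrite expr1n mul1r.
Qed.

Lemma onemX_ge0 k : 0 <= 1 - z ^+ k.
Proof. by rewrite subr_ge0 exprn_ile1. Qed.

Lemma onemX_le k : 1 - z ^+ k <= (1 - z) * k%:R.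
Proof.
rewrite onemX_sum ler_wpM2l // -[X in X%:R]card_ord -sumr_const.
by apply: ler_sum => i _; rewrite exprn_ile1.
Qed.

Lemma onemX_ge k : (1 - z) * (z ^+ k * k%:R) <= 1 - z ^+ k.
Proof.
rewrite onemX_sum ler_wpM2l // mulr_natr -[X in _ *+ X]card_ord -sumr_const.
by apply: ler_sum => i _; rewrite ler_wiXn2l // ltnW.
Qed.

Lemma onemX_ge_upper_tail K k :
  (1 - z) * (z ^+ K * k%:R) <= 1 - z ^+ k + (1 - z) * upper_tail K k.
Proof.
rewrite /upper_tail; case: ltnP => [_ | kK].
  rewrite -[X in X <= _]add0r lerD ?onemX_ge0 // ler_wpM2l //.
  by rewrite -[X in _ <= X]mul1r ler_wpM2r ?exprn_ile1.
rewrite mulr0 addr0 (le_trans _ (onemX_ge k)) // ler_wpM2l // ler_wpM2r //.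
exact: ler_wiXn2l.
Qed.

Lemma onemX_sumn_le_sum (v : seq nat) n : (size v <= n)%N ->
  1 - z ^+ sumn v <= \sum_(j < n) (1 - z ^+ nth 0%N v j).
Proof.
elim: v n => [|a v IH] n /=.
  by move=> _; rewrite subrr sumr_ge0 // => j _; rewrite onemX_ge0.
case: n => // n; rewrite ltnS => vn; rewrite big_ord_recl /=.
have -> : 1 - z ^+ (a + sumn v) = (1 - z ^+ a) + z ^+ a * (1 - z ^+ sumn v).
  by rewrite exprD mulrBr mulr1 addrA subrK.
rewrite lerD // (le_trans _ (IH _ vn)) // -[X in _ <= X]mul1r.
by rewrite ler_wpM2r ?onemX_ge0 ?exprn_ile1.
Qed.

Lemma sum_onemX_le_sumn (v : seq nat) n :
  \sum_(j < n) (1 - z ^+ nth 0%N v j) <= (1 - z) * (sumn v)%:R.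
Proof.
elim: v n => [|a v IH] [|n] /=; rewrite ?big_ord0 ?mulr_ge0 //.
  by rewrite mulr0 big1 // => j _; rewrite nth_nil subrr.
by rewrite big_ord_recl natrD mulrDr lerD ?onemX_le.
Qed.

End OnemX.

Lemma deficit_ratio_le (R : realFieldType) (d w a c : R) :
  0 < d -> w <= d -> a * d <= w + c -> 0 <= (d - w) / d <= 1 - a + c / d.
Proof.
move=> d_gt0 wd adw; rewrite divr_ge0 ?subr_ge0 ?(ltW d_gt0) //=.
rewrite ler_pdivrMr // !mulrDl divfK ?gt_eqF // mulNr mul1r; lra.
Qed.

Lemma ge0_le_EFin (R : realDomainType) (x : \bar R) (y : R) :
  (0 <= x)%E -> (x <= y%:E)%E -> exists r, x = r%:E.
Proof.
move=> x0 xy; exists (fine x).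
by rewrite fineK // ge0_fin_numE // (le_lt_trans xy) ?ltry.
Qed.

Lemma esumZl (R : realType) (T : choiceType) (S : set T) (r : R) (a : T -> \bar R) :
  0 <= r -> (forall x, 0 <= a x)%E ->
  (\esum_(x in S) (r%:E * a x) = r%:E * \esum_(x in S) a x)%E.
Proof.
move=> r0 a0; rewrite /esum -ereal_supZl //; last first.
  apply/set0P; exists (\sum_(x \in set0) a x)%E.
  by exists set0 => //; exact: fsets_set0.
congr ereal_sup; apply/seteqP; split=> x /=.
  case=> A fA <-; exists (\sum_(x \in A) a x)%E; first by exists A.
  by rewrite ge0_mule_fsumr.
by case=> _ [A fA <-] <-; exists A => //; rewrite ge0_mule_fsumr.
Qed.

Lemma cvg_ereal_sup0_ub (R : realType) (T U : Type) (F : set_system U)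
    (f : U -> T -> \bar R) : Filter F ->
  (fun x => ereal_sup [set f x t | t in [set: T]]) @ F --> 0%E ->
  forall e, 0 < e -> \forall x \near F, forall t, (f x t <= e%:E)%E.
Proof.
move=> FF /fine_cvgP[sup_fin /cvgrPdist_le sup_small] e e_gt0.
apply: filterS2 sup_fin (sup_small e e_gt0) => x /= /fineK sup_fineK.
rewrite sub0r normrN => /(le_trans (ler_norm _)); rewrite -lee_fin sup_fineK.
by move=> sup_le t; apply: le_trans sup_le; apply: ereal_sup_ubound; exists t.
Qed.

Lemma cvg_ereal_sup0 (R : realType) (T U : Type) (t0 : T) (F : set_system U)
    (g : U -> T -> R) : Filter F ->
  (forall e, 0 < e -> \forall x \near F, forall t, 0 <= g x t <= e) ->
  (fun x => ereal_sup [set (g x t)%:E | t in [set: T]]) @ F --> 0%E.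
Proof.
move=> FF g_small.
have sup_bound e : 0 < e -> \forall x \near F,
    (0 <= ereal_sup [set (g x t)%:E | t in [set: T]] <= e%:E)%E.
  move=> e_gt0; apply: filterS (g_small e e_gt0) => x gb; apply/andP; split.
    apply: le_trans (_ : (g x t0)%:E <= _)%E.
      by rewrite lee_fin; case/andP: (gb t0).
    by apply: ereal_sup_ubound; exists t0.
  by apply: ge_ereal_sup => _ [t _ <-]; rewrite lee_fin; case/andP: (gb t).
apply/fine_cvgP; split.
  apply: filterS (sup_bound 1 ltr01) => x /andP[s0 s1].
  by rewrite ge0_fin_numE // (le_lt_trans s1) ?ltry.
apply/cvgrPdist_le => e e_gt0; apply: filterS (sup_bound e e_gt0) => x /andP[s0 s1].
have [s supE] := ge0_le_EFin s0 s1; rewrite supE !lee_fin in s0 s1.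
by rewrite /= supE /= sub0r normrN ger0_norm.
Qed.

Section Ratios.
Variables (R : realType) (p : nat -> seq nat -> R).
Hypothesis p_ge0 : forall i v, 0 <= p i v.
Implicit Types (i : nat) (f g : seq nat -> R).

Lemma expect_ge0 i f : (forall v, 0 <= f v) -> (0 <= expect p i f)%E.
Proof. by move=> f0; apply: esum_ge0 => v _; rewrite lee_fin mulr_ge0. Qed.

Lemma le_expect i f g : (forall v, f v <= g v) -> (expect p i f <= expect p i g)%E.
Proof. by move=> fg; apply: le_esum => v _; rewrite lee_fin ler_wpM2l. Qed.

Lemma expectZl i c f : 0 <= c -> (forall v, 0 <= f v) ->
  expect p i (fun v => c * f v) = (c%:E * expect p i f)%E.
Proof.
move=> c0 f0; rewrite /expect -esumZl //; last by move=> v; rewrite lee_fin mulr_ge0.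
by apply: eq_esum => v _; rewrite -EFinM mulrCA.
Qed.

Lemma expectD i f g : (forall v, 0 <= f v) -> (forall v, 0 <= g v) ->
  expect p i (fun v => f v + g v) = (expect p i f + expect p i g)%E.
Proof.
move=> f0 g0; rewrite /expect -esumD => [|v _|v _]; rewrite ?lee_fin ?mulr_ge0 //.
by apply: eq_esum => v _; rewrite mulrDr EFinD.
Qed.

Lemma expect_sum i n (f : nat -> seq nat -> R) : (forall j v, 0 <= f j v) ->
  (\sum_(0 <= j < n) expect p i (f j))%E =
  expect p i (fun v => \sum_(0 <= j < n) f j v).
Proof.
move=> f0; rewrite /expect -esum_sum => [|v j _ _]; last by rewrite lee_fin mulr_ge0.
by apply: eq_esum => v _; rewrite sumEFin mulr_sumr.
Qed.

Hypothesis Mi_fin : forall i, (Miext p i < +oo)%E.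

Lemma Miext_fineK i : Miext p i = (Mi p i)%:E.
Proof. by rewrite /Mi fineK // ge0_fin_numE ?expect_ge0. Qed.

Lemma Mi_ge0 i : 0 <= Mi p i.
Proof. by rewrite -lee_fin -Miext_fineK expect_ge0. Qed.

Section FixedZ.
Variable z : R.
Hypothesis z01 : 0 <= z <= 1.

Let onem_ge0 : 0 <= 1 - z. Proof. by case/andP: z01 => _; rewrite subr_ge0. Qed.

Lemma expect_onem_Ztot i :
  expect p i (fun v => (1 - z) * (Ztot v)%:R) = ((1 - z) * Mi p i)%:E.
Proof. by rewrite expectZl // -/(Miext p i) Miext_fineK. Qed.

Let expect_onemX_ge0 i j : (0 <= expect p i (fun v => (1 - z ^+ Zij v j)%R))%E.
Proof. by apply: expect_ge0 => v; rewrite onemX_ge0. Qed.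

Lemma expect_onemX_le_sum i :
  (expect p i (fun v => (1 - z ^+ Ztot v)%R) <=
   \sum_(0 <= j <oo) expect p i (fun v => (1 - z ^+ Zij v j)%R))%E.
Proof.
rewrite {1}/expect /esum; apply: ge_ereal_sup => _ [X [finX _] <-].
pose n := (\max_(v <- finmap.enum_fset (fset_set X)) size v)%N.
apply: le_trans (nneseries_lim_ge n (fun j _ _ => expect_onemX_ge0 i j)).
rewrite expect_sum => [|j v]; last by rewrite onemX_ge0.
apply: esum_ge; exists X => //; apply: lee_fsum => // v Xv.
rewrite lee_fin ler_wpM2l // big_mkord onemX_sumn_le_sum //.
by apply: (@leq_bigmax_seq _ _ xpredT) => //; rewrite in_fset_set // inE.
Qed.

Lemma sum_expect_onemX_le i :
  (\sum_(0 <= j <oo) expect p i (fun v => (1 - z ^+ Zij v j)%R) <=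
   ((1 - z) * Mi p i)%:E)%E.
Proof.
rewrite -expect_onem_Ztot; apply: lime_le.
  exact: is_cvg_nneseries (fun j _ _ => expect_onemX_ge0 i j).
apply: nearW => n; rewrite expect_sum => [|j v]; last by rewrite onemX_ge0.
by apply: le_expect => v; rewrite big_mkord sum_onemX_le_sumn.
Qed.

Lemma expect_onemX_ge i K :
  (((1 - z) * z ^+ K * Mi p i)%:E <=
   expect p i (fun v => (1 - z ^+ Ztot v)%R) +
   (1 - z)%:E * expect p i (fun v => upper_tail K (Ztot v)))%E.
Proof.
have tail_ge0 k : 0 <= upper_tail K k :> R by rewrite /upper_tail; case: ifP.
rewrite EFinM -Miext_fineK -expectZl ?mulr_ge0 ?exprn_ge0 //; last by case/andP: z01.
rewrite -expectZl // -expectD => [|v|v]; rewrite ?onemX_ge0 ?mulr_ge0 //.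
by apply: le_expect => v; rewrite -mulrA onemX_ge_upper_tail.
Qed.

End FixedZ.

Lemma deficit_ratio_bound i z K e (W : \bar R) : 0 <= z -> z < 1 -> 0 <= e ->
  ((Mi p i)^-1%:E * expect p i (fun v => upper_tail K (Ztot v)) <= e%:E)%E ->
  (expect p i (fun v => (1 - z ^+ Ztot v)%R) <= W)%E ->
  (W <= ((1 - z) * Mi p i)%:E)%E ->
  0 <= ((1 - z) * Mi p i - fine W) / ((1 - z) * Mi p i) <= K%:R * (1 - z) + e.
Proof.
move=> z_ge0 z_lt1 e_ge0 tail_le AW Wle.
have z01 : 0 <= z <= 1 by rewrite z_ge0 ltW.
have onem_gt0 : 0 < 1 - z by rewrite subr_gt0.
have bound_ge0 : 0 <= K%:R * (1 - z) + e.
  by rewrite addr_ge0 ?mulr_ge0 ?(ltW onem_gt0).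
have [->|Mi_neq0] := eqVneq (Mi p i) 0.
  by rewrite mulr0 invr0 mulr0 lexx bound_ge0.
have Mi_gt0 : 0 < Mi p i by rewrite lt0r Mi_neq0 Mi_ge0.
set T := expect p i _ in tail_le.
have T_ge0 : (0 <= T)%E by apply: expect_ge0 => v; rewrite /upper_tail; case: ifP.
have T_le : (T <= (Mi p i)%:E)%E.
  by rewrite -Miext_fineK; apply: le_expect => v; rewrite /upper_tail; case: ifP.
have A_ge0 := expect_ge0 i (fun v => onemX_ge0 z01 (Ztot v)).
have lower := expect_onemX_ge z01 i K.
have [t TE] := ge0_le_EFin T_ge0 T_le.
have [a AE] := ge0_le_EFin A_ge0 (le_trans AW Wle).
have [w WE] := ge0_le_EFin (le_trans A_ge0 AW) Wle.
rewrite TE -EFinM lee_fin ler_pdivrMl // in tail_le.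
rewrite -/T TE AE -EFinM -EFinD lee_fin in lower.
rewrite AE WE lee_fin in AW; rewrite WE lee_fin in Wle; rewrite WE /=.
have d_gt0 : 0 < (1 - z) * Mi p i by rewrite mulr_gt0.
have adw : z ^+ K * ((1 - z) * Mi p i) <= w + (1 - z) * t.
  by rewrite mulrCA mulrA (le_trans lower) // lerD2r.
have /andP[-> ratio_le] := deficit_ratio_le d_gt0 Wle adw.
rewrite /= (le_trans ratio_le) //.
have -> : (1 - z) * t / ((1 - z) * Mi p i) = t / Mi p i.
  by rewrite invfM mulrACA divff ?gt_eqF // mul1r.
by rewrite [K%:R * _]mulrC lerD ?onemX_le // ler_pdivrMr // mulrC.
Qed.

Lemma ratios_small :
  (forall e, 0 < e -> exists K, forall i,
     ((Mi p i)^-1%:E * expect p i (fun v => upper_tail K (Ztot v)) <= e%:E)%E) ->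
  forall e, 0 < e -> \forall z \near 1^'-, forall i,
    0 <= ratio1 p z i <= e /\ 0 <= ratio2 p z i <= e.
Proof.
move=> tail_small e e_gt0.
have e2_gt0 : 0 < e / 2 by rewrite divr_gt0.
have [K tail_le] := tail_small _ e2_gt0.
have K1_gt0 : 0 < K%:R + 1 :> R by rewrite ltr_wpDl.
near=> z => i.
have z_gt0 : 0 < z by near: z; apply: nbhs_left_gt; exact: ltr01.
have z_lt1 : z < 1 by near: z; exact: nbhs_left_lt.
have onem_small : 1 - z < e / 2 / (K%:R + 1).
  by near: z; apply: nbhs_left_ltBl; rewrite divr_gt0.
have z01 : 0 <= z <= 1 by rewrite (ltW z_gt0) (ltW z_lt1).
have bound_le : K%:R * (1 - z) + e / 2 <= e.
  rewrite ltr_pdivlMr // in onem_small.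
  have K_ge0 : 0 <= K%:R :> R by [].
  nra.
have bound W := deficit_ratio_bound (W := W) (ltW z_gt0) z_lt1 (ltW e2_gt0)
  (tail_le i).
have /andP[r1_ge0 r1_le] := bound _ (lexx _) (le_trans (expect_onemX_le_sum z01 i)
  (sum_expect_onemX_le z01 i)).
have /andP[r2_ge0 r2_le] := bound _ (expect_onemX_le_sum z01 i)
  (sum_expect_onemX_le z01 i).
by rewrite /ratio1 /ratio2 r1_ge0 r2_ge0 (le_trans r1_le) ?(le_trans r2_le).
Unshelve. all: end_near.
Qed.

End Ratios.

Theorem theorem3 (R : realType) (p : nat -> seq nat -> R) :
  is_offspring_law p -> in_M1 p -> ~ F_linear p ->
  ((fun z : R => ereal_sup [set (ratio1 p z i)%:E | i in [set: nat]])
     @ 1^'- --> 0%E) /\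
  ((fun z : R => ereal_sup [set (ratio2 p z i)%:E | i in [set: nat]])
     @ 1^'- --> 0%E).
Proof.
move=> [p_ge0 _] [Mi_fin [_ [_ [_ [_ [_ [_ [_ tail_cvg0]]]]]]]] _.
have tail_small e : 0 < e -> exists K, forall i,
    ((Mi p i)^-1%:E * expect p i (fun v => upper_tail K (Ztot v)) <= e%:E)%E.
  by move=> e_gt0; apply: filter_ex (cvg_ereal_sup0_ub _ tail_cvg0 e_gt0).
have small := ratios_small p_ge0 Mi_fin tail_small.
by split; apply: (cvg_ereal_sup0 0%N) => e /small;
  apply: filterS => z + i => /(_ i) [].
Qed.
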